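(* Consider a unit dual quaternion $\underline{\boldsymbol{x}}=\boldsymbol{r}+\varepsilon\frac{1}{2}\boldsymbol{p}\boldsymbol{r}$, with $\boldsymbol{r}\in\mathbb{S}^{3}$ and $\boldsymbol{p}\in\mathbb{H}_{p}$. Then \[ \operatorname{vec}_{8}\dot{\underline{\boldsymbol{x}}}=\underbrace{\begin{bmatrix}\boldsymbol{Q}\left(\boldsymbol{r}\right) & \boldsymbol{0}_{4\times3}\\ \frac{1}{2}\overset{+}{\boldsymbol{H}}_{4}\left(\boldsymbol{p}\right)\boldsymbol{Q}\left(\boldsymbol{r}\right) & \overset{-}{\boldsymbol{H}}_{4}\left(\boldsymbol{r}\right)\boldsymbol{Q}_{p} \end{bmatrix}}_{\boldsymbol{Q}_{8}\left(\underline{\boldsymbol{x}}\right)}\operatorname{vec}_{6}\dot{\underline{\boldsymbol{y}}}, \] where $\boldsymbol{Q}\left(\boldsymbol{r}\right)=\frac{\partial\operatorname{vec}_{4}\boldsymbol{r}}{\partial\operatorname{vec}_{3}\boldsymbol{y}}$ with $\boldsymbol{y}=\log\boldsymbol{r}$, $\boldsymbol{Q}_{p}=\begin{bmatrix}\boldsymbol{0}_{1\times3}\\ \boldsymbol{I}_{3}\end{bmatrix}$, and $\underline{\boldsymbol{y}}=\log\underline{\boldsymbol{x}}$. Furthermore, $\boldsymbol{Q}_{8}\left(\underline{\boldsymbol{x}}\right)\in\mathbb{R}^{8\times6}$ has full column rank; therefore $\boldsymbol{Q}_{8}\left(\underline{\boldsymbol{x}}\right)^{+}\boldsymbol{Q}_{8}\left(\underline{\boldsymbol{x}}\right)=\boldsymbol{I}$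 (with $\boldsymbol{Q}_8^{+}=(\boldsymbol{Q}_8^T\boldsymbol{Q}_8)^{-1}\boldsymbol{Q}_8^T$) and $\operatorname{vec}_{8}\dot{\underline{\boldsymbol{x}}}=\boldsymbol{0}$ if and only if $\operatorname{vec}_{6}\dot{\underline{\boldsymbol{y}}}=\boldsymbol{0}$.
   Context: Quaternions are $\boldsymbol{h}=h_{1}+\hat{\imath}h_{2}+\hat{\jmath}h_{3}+\hat{k}h_{4}$ with $\hat{\imath}^{2}=\hat{\jmath}^{2}=\hat{k}^{2}=\hat{\imath}\hat{\jmath}\hat{k}=-1$; $\mathbb{H}_p$ is the set of pure quaternions (zero real part), $\mathbb{S}^3$ the unit-norm quaternions. Dual quaternions are $\underline{\boldsymbol{h}}=\boldsymbol{h}+\varepsilon\boldsymbol{h}'$ with $\varepsilon^{2}=0$, $\varepsilon\neq0$. $\operatorname{vec}_{4}\boldsymbol{h}=[h_1\ h_2\ h_3\ h_4]^T$, $\operatorname{vec}_{8}\underline{\boldsymbol{h}}=[\operatorname{vec}_4\boldsymbol{h}^T\ \operatorname{vec}_4\boldsymbol{h}'^T]^T$; for a pure quaternion $\operatorname{vec}_3$ gives its three imaginary coefficients, and for a pure dual quaternion $\underline{\boldsymbol{h}}=h_{1}\hat{\imath}+h_{2}\hat{\jmath}+h_{3}\hat{k}+\varepsilon(h_{4}\hat{\imath}+h_{5}\hat{\jmath}+h_{6}\hat{k})$, $\operatorname{vec}_6\underline{\boldsymbol{h}}=[h_1\cdots h_6]^T$. The Hamilton operators satisfy $\operatorname{vec}_4(\boldsymbol{h}_1\boldsymbol{h}_2)=\overset{+}{\boldsymbol{H}}_4(\boldsymbol{h}_1)\operatorname{vec}_4\boldsymbol{h}_2=\overset{-}{\boldsymbol{H}}_4(\boldsymbol{h}_2)\operatorname{vec}_4\boldsymbol{h}_1$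 and are $\overset{+}{\boldsymbol{H}}_{4}(\boldsymbol{h})=\begin{bmatrix}h_{1} & -h_{2} & -h_{3} & -h_{4}\\ h_{2} & h_{1} & -h_{4} & h_{3}\\ h_{3} & h_{4} & h_{1} & -h_{2}\\ h_{4} & -h_{3} & h_{2} & h_{1}\end{bmatrix}$, $\overset{-}{\boldsymbol{H}}_{4}(\boldsymbol{h})=\begin{bmatrix}h_{1} & -h_{2} & -h_{3} & -h_{4}\\ h_{2} & h_{1} & h_{4} & -h_{3}\\ h_{3} & -h_{4} & h_{1} & h_{2}\\ h_{4} & h_{3} & -h_{2} & h_{1}\end{bmatrix}$. Write $\boldsymbol{r}=r_1+r_2\hat{\imath}+r_3\hat{\jmath}+r_4\hat{k}=\cos(\phi/2)+\boldsymbol{n}\sin(\phi/2)$ with $\boldsymbol{n}=n_x\hat{\imath}+n_y\hat{\jmath}+n_z\hat{k}$ a unit pure quaternion and $\phi\in[0,2\pi)$; $\log\boldsymbol{r}=\frac{\phi}{2}\boldsymbol{n}$ and $\log\underline{\boldsymbol{x}}=\frac{1}{2}(\phi\boldsymbol{n}+\varepsilon\boldsymbol{p})$. Explicitly, $\boldsymbol{Q}(\boldsymbol{r})=\begin{bmatrix}-r_{2} & -r_{3} & -r_{4}\\ \Gamma n_{x}^{2}+\Theta & \Gamma n_{x}n_{y} & \Gamma n_{x}n_{z}\\ \Gamma n_{y}n_{x} & \Gamma n_{y}^{2}+\Theta & \Gamma n_{y}n_{z}\\ \Gamma n_{z}n_{x} & \Gamma n_{z}n_{y} & \Gamma n_{z}^{2}+\Theta\end{bmatrix}$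 with $\Gamma=r_1-\Theta$, $\Theta=\frac{\sin(\phi/2)}{\phi/2}$ for $\phi\neq0$ and $\Theta=1$ for $\phi=0$. *)

From HB Require Import structures.
From mathcomp Require Import all_boot all_order all_algebra.
From mathcomp Require Import all_classical all_reals all_analysis.
Set Implicit Arguments. Unset Strict Implicit. Unset Printing Implicit Defensive.
Import Order.TTheory GRing.Theory Num.Theory.
Import numFieldNormedType.Exports.
Local Open Scope ring_scope.

Section Quat.
Variable R : realType.

(* k-th coefficient (0-based) of a quaternion h = h1 + i h2 + j h3 + k h4,
   stored as vec4 h = [h1 h2 h3 h4]^T *)
Definition qc (q : 'cV[R]_4) (k : nat) : R := q (inord k) 0.

Definition unitq (q : 'cV[R]_4) : Prop := \sum_(i < 4) q i 0 ^+ 2 = 1.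
Definition pureq (q : 'cV[R]_4) : Prop := qc q 0 = 0.

Definition mx_of_list m n (l : seq (seq R)) : 'M[R]_(m, n) :=
  \matrix_(i < m, j < n) nth 0 (nth [::] l i) j.

Definition Hp (h : 'cV[R]_4) : 'M[R]_4 :=
  let h1 := qc h 0 in let h2 := qc h 1 in let h3 := qc h 2 in let h4 := qc h 3 in
  mx_of_list 4 4 [:: [:: h1; -h2; -h3; -h4];
                     [:: h2;  h1; -h4;  h3];
                     [:: h3;  h4;  h1; -h2];
                     [:: h4; -h3;  h2;  h1]].
Definition Hm (h : 'cV[R]_4) : 'M[R]_4 :=
  let h1 := qc h 0 in let h2 := qc h 1 in let h3 := qc h 2 in let h4 := qc h 3 in
  mx_of_list 4 4 [:: [:: h1; -h2; -h3; -h4];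
                     [:: h2;  h1;  h4; -h3];
                     [:: h3; -h4;  h1;  h2];
                     [:: h4;  h3; -h2;  h1]].

Definition conjq (q : 'cV[R]_4) : 'cV[R]_4 :=
  \col_(i < 4) (if i == ord0 then q i 0 else - q i 0).

Definition vec3 (q : 'cV[R]_4) : 'cV[R]_3 := \col_(i < 3) q (lift ord0 i) 0.

(* r = cos(phi/2) + n sin(phi/2), phi in [0, 2 pi] (r unit) *)
Definition phi (r : 'cV[R]_4) : R := 2 * acos (qc r 0).
Definition nvec (r : 'cV[R]_4) : 'cV[R]_3 := (sin (phi r / 2))^-1 *: vec3 r.
Definition Theta (r : 'cV[R]_4) : R :=
  if phi r == 0 then 1 else sin (phi r / 2) / (phi r / 2).
Definition Gamma (r : 'cV[R]_4) : R := qc r 0 - Theta r.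

Definition logr (r : 'cV[R]_4) : 'cV[R]_3 := (phi r / 2) *: nvec r.

Definition Qr (r : 'cV[R]_4) : 'M[R]_(4, 3) :=
  let n := nvec r in let G := Gamma r in let T := Theta r in
  let nx := n 0 0 in let ny := n (inord 1) 0 in let nz := n (inord 2) 0 in
  mx_of_list 4 3 [:: [:: - qc r 1; - qc r 2; - qc r 3];
                     [:: G * nx ^+ 2 + T; G * nx * ny; G * nx * nz];
                     [:: G * ny * nx; G * ny ^+ 2 + T; G * ny * nz];
                     [:: G * nz * nx; G * nz * ny; G * nz ^+ 2 + T]].

Definition Qp : 'M[R]_(4, 3) := col_mx (0 : 'M[R]_(1, 3)) (1%:M : 'M[R]_3).

(* dual quaternions: vec8 x = [vec4 x ; vec4 x'] *)
Definition prim (x : 'cV[R]_(4 + 4)) : 'cV[R]_4 := usubmx x.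
Definition dual (x : 'cV[R]_(4 + 4)) : 'cV[R]_4 := dsubmx x.

(* vec8 of x = r + eps (1/2) p r *)
Definition xof (r p : 'cV[R]_4) : 'cV[R]_(4 + 4) :=
  col_mx r ((1 / 2 : R) *: (Hp p *m r)).

(* translation p recovered from a unit dual quaternion: p = 2 x' r^* *)
Definition pof (x : 'cV[R]_(4 + 4)) : 'cV[R]_4 :=
  (2 : R) *: (Hp (dual x) *m conjq (prim x)).

(* vec6 (log x), log x = (1/2)(phi n + eps p) *)
Definition dlog (x : 'cV[R]_(4 + 4)) : 'cV[R]_(3 + 3) :=
  col_mx (logr (prim x)) ((1 / 2 : R) *: vec3 (pof x)).

Definition Q8 (x : 'cV[R]_(4 + 4)) : 'M[R]_(4 + 4, 3 + 3) :=
  block_mx (Qr (prim x)) (0 : 'M[R]_(4, 3))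
           ((1 / 2 : R) *: (Hp (pof x) *m Qr (prim x))) (Hm (prim x) *m Qp).

End Quat.

From HB Require Import structures.
From mathcomp Require Import all_boot all_order all_algebra.
From mathcomp Require Import all_classical all_reals all_analysis.
From mathcomp Require Import ring lra.
Import Order.TTheory GRing.Theory Num.Theory.
Import numFieldNormedType.Exports.
Set Implicit Arguments. Unset Strict Implicit. Unset Printing Implicit Defensive.
Local Open Scope classical_set_scope.
Local Open Scope ring_scope.

(* Writing y = log r, for |y| < pi one has r = cos|y| + sinc|y| y, so the chain
   rule gives r' = Q(r) y'; at y = 0, where |y| is not differentiable, sinc|y| y
   and cos|y| - 1 are each a function continuous at 0 times one vanishing there.
   The dual part p r / 2 is bilinear in (p, r), and p = 2 Qp w for the dual half w
   of log x, which gives the second block row of Q8.  Q8 is block lower triangular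
   with injective diagonal blocks: the first row of Q(r) u kills the component of
   u along n, after which the other rows reduce to Theta u with
   Theta = sinc(phi/2) > 0, and H-(r) Qp is an isometry because H-(r) is
   orthogonal.  An injective real matrix A has an invertible Gram matrix A^T A,
   which gives the rank and the pseudo-inverse identity. *)

Section RealMatrixCalculus.
Variable R : realFieldType.
Implicit Types t : R.

Lemma is_derive_mulr (f g : R -> R) df dg t :
  is_derive t 1 f df -> is_derive t 1 g dg ->
  is_derive t 1 (fun s => f s * g s) (df * g t + f t * dg).
Proof. by move=> df_t dg_t; rewrite addrC [df * _]mulrC; exact: is_deriveM. Qed.

Lemma is_derive_mxP m n (M : R -> 'M[R]_(m, n)) (D : 'M[R]_(m, n)) t :
  is_derive t 1 M D <-> forall i j, is_derive t 1 (fun s => M s i j) (D i j).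
Proof.
split=> [dM i j | dMij].
- have dMt : derivable M t 1 by case: dM.
  have /derivable_mxP dM' := dMt.
  apply: DeriveDef; first exact: dM'.
  by rewrite -[D]derive_val derive_mx // mxE.
- have dMt : derivable M t 1 by apply/derivable_mxP => i j; case: (dMij i j).
  apply: DeriveDef => //; rewrite derive_mx //.
  by apply/matrixP => i j; rewrite mxE derive_val.
Qed.

Lemma is_derive_col_mxP m1 m2 n (f : R -> 'M[R]_(m1, n)) (g : R -> 'M[R]_(m2, n))
    (Df : 'M[R]_(m1, n)) (Dg : 'M[R]_(m2, n)) t :
  is_derive t 1 (fun s => col_mx (f s) (g s)) (col_mx Df Dg) <->
  is_derive t 1 f Df /\ is_derive t 1 g Dg.
Proof.
rewrite !is_derive_mxP; split=> [dfg | [df dg] i j].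
- split=> i j.
  + by have := dfg (lshift m2 i) j; under eq_fun do rewrite col_mxEu; rewrite col_mxEu.
  + by have := dfg (rshift m1 i) j; under eq_fun do rewrite col_mxEd; rewrite col_mxEd.
- rewrite -[i]splitK; case: (fintype.split i) => k /=.
  + by under eq_fun do rewrite col_mxEu; rewrite col_mxEu.
  + by under eq_fun do rewrite col_mxEd; rewrite col_mxEd.
Qed.

Lemma is_derive_mulmx m n p (A : R -> 'M[R]_(m, n)) (B : R -> 'M[R]_(n, p)) DA DB t :
  is_derive t 1 A DA -> is_derive t 1 B DB ->
  is_derive t 1 (fun s => A s *m B s) (DA *m B t + A t *m DB).
Proof.
rewrite !is_derive_mxP => dA dB i j.
have -> : (fun s => (A s *m B s) i j) = \sum_k (fun s => A s i k * B s k j).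
  by rewrite fct_sumE; apply/funext => s; rewrite mxE.
rewrite !mxE -big_split /=.
by apply: is_derive_sum => k; exact: is_derive_mulr.
Qed.

Lemma is_derive_scale m n (a : R -> R) (F : R -> 'M[R]_(m, n)) da DF t :
  is_derive t 1 a da -> is_derive t 1 F DF ->
  is_derive t 1 (fun s => a s *: F s) (da *: F t + a t *: DF).
Proof.
rewrite !is_derive_mxP => da_t dF i j.
under eq_fun do rewrite mxE.
by rewrite !mxE; exact: is_derive_mulr.
Qed.

Lemma is_derive_linear m n m' n' (f : {linear 'M[R]_(m, n) -> 'M[R]_(m', n')})
    (F : R -> 'M[R]_(m, n)) D t :
  is_derive t 1 F D -> is_derive t 1 (fun s => f (F s)) (f D).
Proof.
have fE M i j : f M i j = \sum_k \sum_l M k l * f (delta_mx k l) i j.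
  rewrite {1}(matrix_sum_delta M) linear_sum summxE; apply: eq_bigr => k _.
  by rewrite linear_sum summxE; apply: eq_bigr => l _; rewrite linearZ mxE.
rewrite !is_derive_mxP => dF i j.
have -> : (fun s => f (F s) i j) =
    \sum_k \sum_l (fun s => F s k l * f (delta_mx k l) i j).
  by apply/funext => s; rewrite fE fct_sumE; apply: eq_bigr => k _; rewrite fct_sumE.
rewrite (fE D); apply: is_derive_sum => k; apply: is_derive_sum => l.
have := is_derive_mulr (dF k l) (is_derive_cst (f (delta_mx k l) i j) t 1).
by rewrite mulr0 addr0.
Qed.

(* Only continuity is asked of g: the difference quotient of g F at t is
   g (t + h) times that of F, because F t = 0. *)
Lemma is_derive_scale_root (V : normedModType R) (g : R -> R) (F : R -> V) DF t :
  {for t, continuous g} -> is_derive t 1 F DF -> F t = 0 ->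
  is_derive t 1 (fun s => g s *: F s) (g t *: DF).
Proof.
move=> gt [dF <-] Ft0.
have quotient : (fun h => h^-1 *: (((fun s => g s *: F s) \o shift t) (h *: 1) - g t *: F t))
    @ 0^' --> g t *: 'D_1 F t.
  have -> : (fun h => h^-1 *: (((fun s => g s *: F s) \o shift t) (h *: 1) - g t *: F t))
      = (fun h => g (h + t) *: (h^-1 *: ((F \o shift t) (h *: 1) - F t))).
    apply/funext => h.
    by rewrite /= Ft0 !scaler0 !subr0 [h%:A]mulr1 !scalerA mulrC.
  apply: cvgZ; last exact: dF.
  have shift0 : (fun h : R => h + t) @ 0^' --> t.
    apply: cvg_within_filter; rewrite -{2}[t]add0r.
    by apply: cvgD; [exact: cvg_id | exact: cvg_cst].
  exact: cvg_comp shift0 gt.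
by apply: DeriveDef; [apply/cvg_ex; eexists; exact: quotient | exact: cvg_lim quotient].
Qed.

Definition vdot n (u w : 'cV[R]_n) : R := \sum_i u i 0 * w i 0.

Lemma vdotE n (u w : 'cV[R]_n) : vdot u w = (u^T *m w) 0 0.
Proof. by rewrite mxE; apply: eq_bigr => i _; rewrite mxE. Qed.

Lemma vdotC n (u w : 'cV[R]_n) : vdot u w = vdot w u.
Proof. by apply: eq_bigr => i _; rewrite mulrC. Qed.

Lemma vdotZl n a (u w : 'cV[R]_n) : vdot (a *: u) w = a * vdot u w.
Proof. by rewrite /vdot mulr_sumr; apply: eq_bigr => i _; rewrite mxE mulrA. Qed.

Lemma vdot0l n (w : 'cV[R]_n) : vdot 0 w = 0.
Proof. by rewrite /vdot big1 // => i _; rewrite mxE mul0r. Qed.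

Lemma vdot_self_ge0 n (u : 'cV[R]_n) : 0 <= vdot u u.
Proof. by apply: sumr_ge0 => i _; rewrite -expr2 sqr_ge0. Qed.

Lemma vdot_self_eq0 n (u : 'cV[R]_n) : vdot u u = 0 -> u = 0.
Proof.
move/psumr_eq0P => u2_0; apply/matrixP => i j; rewrite (ord1 j) mxE.
by apply/eqP; rewrite -sqrf_eq0 expr2 u2_0 // => k _; rewrite -expr2 sqr_ge0.
Qed.

Lemma is_derive_vdot n (u w : R -> 'cV[R]_n) Du Dw t :
  is_derive t 1 u Du -> is_derive t 1 w Dw ->
  is_derive t 1 (fun s => vdot (u s) (w s)) (vdot Du (w t) + vdot (u t) Dw).
Proof.
rewrite !is_derive_mxP => du dw.
have -> : (fun s => vdot (u s) (w s)) = \sum_i (fun s => u s i 0 * w s i 0).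
  by rewrite fct_sumE.
by rewrite /vdot -big_split; apply: is_derive_sum => i; exact: is_derive_mulr.
Qed.

Lemma trmx_mul_unitmx m n (A : 'M[R]_(m, n)) :
  (forall v : 'cV[R]_n, A *m v = 0 -> v = 0) -> A^T *m A \in unitmx.
Proof.
move=> A_inj; rewrite unitmxE unitfE; apply/negP => /det0P[v v_neq0 vAA0].
suff /A_inj/(congr1 trmx) : A *m v^T = 0.
  by rewrite trmxK trmx0 => v0; rewrite v0 eqxx in v_neq0.
apply: vdot_self_eq0; rewrite vdotE trmx_mul trmxK !mulmxA -(mulmxA v) vAA0 mul0mx.
by rewrite mxE.
Qed.

Lemma mxrank_inj m n (A : 'M[R]_(m, n)) :
  (forall v : 'cV[R]_n, A *m v = 0 -> v = 0) -> \rank A = n.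
Proof.
move=> /trmx_mul_unitmx AA_unit; apply/eqP; rewrite eqn_leq rank_leq_col /=.
by rewrite -{1}(mxrank_unit AA_unit) mxrankM_maxr.
Qed.

End RealMatrixCalculus.

Section Sinc.
Variable R : realType.
Implicit Types u : R.

Definition sinc (u : R) : R := if u == 0 then 1 else sin u / u.

Lemma sinc0 : sinc 0 = 1.
Proof. by rewrite /sinc eqxx. Qed.

Lemma sincE u : u != 0 -> sinc u = sin u / u.
Proof. by rewrite /sinc => /negbTE ->. Qed.

Lemma sinc_gt0 u : 0 <= u < pi -> 0 < sinc u.
Proof.
case/andP; rewrite le_eqVlt => /predU1P[<- _ | u_gt0 u_lt_pi]; first by rewrite sinc0.
by rewrite sincE ?gt_eqF // divr_gt0 // sin_gt0_pi // u_gt0.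
Qed.

Lemma sinc_continuous0 : {for 0, continuous sinc}.
Proof.
apply/continuous_withinNx; rewrite sinc0.
have sin_quotient :
    (fun h : R => h^-1 *: ((sin \o shift 0) (h *: 1) - sin 0)) @ 0^' --> 'D_1 sin 0.
  exact: derivable_sin.
rewrite derive_val cos0 in sin_quotient.
apply: cvg_trans sin_quotient; apply: near_eq_cvg; near=> h.
have h0 : h != 0 by near: h; exact: nbhs_dnbhs_neq.
by rewrite /= sincE // sin0 subr0 addr0 [h%:A]mulr1 mulrC.
Unshelve. all: by end_near.
Qed.

Lemma is_derive_sinc u : u != 0 -> is_derive u 1 sinc ((cos u - sinc u) / u).
Proof.
move=> u0; apply: (@near_eq_is_derive _ _ _ (fun x => sin x * x^-1)).
  near=> x; rewrite sincE //; near: x; exact: cvgr_neq0 (cvg_id) u0.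
apply: is_derive_eq.
  exact: is_derive_mulr (is_derive_sin u) (is_deriveV u0 (is_derive_id u 1)).
by rewrite sincE // [_%:A]mulr1; field.
Unshelve. all: by end_near.
Qed.

Lemma cos_sinc_half u : cos u = 1 - sinc (u / 2) ^+ 2 * u ^+ 2 / 2.
Proof.
have -> : cos u = 1 - 2 * sin (u / 2) ^+ 2.
  by rewrite {1}(splitr u) cosD -!expr2 cos2sin2 mulr2n; ring.
have [-> | u0] := eqVneq u 0; first by rewrite mul0r sin0; ring.
by rewrite sincE ?mulf_neq0 ?invr_eq0 ?pnatr_eq0 //; field.
Qed.

End Sinc.

Section EuclideanNorm.
Variable R : rcfType.

Definition enorm n (u : 'cV[R]_n) : R := Num.sqrt (vdot u u).

Lemma enormZ n (a : R) (u : 'cV[R]_n) : enorm (a *: u) = `|a| * enorm u.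
Proof. by rewrite /enorm vdotZl vdotC vdotZl mulrA -expr2 sqrtrM ?sqr_ge0 // sqrtr_sqr. Qed.

End EuclideanNorm.

Section QuaternionExp.
Variables (R : realType) (y : R -> 'cV[R]_3) (Dy : 'cV[R]_3) (t0 : R).
Hypothesis dy : is_derive t0 1 y Dy.

Let theta0 := enorm (y t0).
Let n0 := theta0^-1 *: y t0.

Let is_derive_sqnorm : is_derive t0 1 (fun s => vdot (y s) (y s)) (2 * vdot (y t0) Dy).
Proof. by apply: is_derive_eq; [exact: is_derive_vdot | rewrite vdotC; ring]. Qed.

Let enorm_continuous : {for t0, continuous (fun s => enorm (y s))}.
Proof.
apply: (@continuous_comp _ _ _ (fun s => vdot (y s) (y s))); last exact: sqrt_continuous.
by apply/differentiable_continuous/derivable1_diffP; case: is_derive_sqnorm.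
Qed.

Let y0_eq0 : theta0 = 0 -> y t0 = 0.
Proof.
move/eqP; rewrite sqrtr_eq0 => y2_le0.
by apply/vdot_self_eq0/eqP; rewrite eq_le y2_le0 vdot_self_ge0.
Qed.

Lemma is_derive_enorm : theta0 != 0 ->
  is_derive t0 1 (fun s => enorm (y s)) (vdot (y t0) Dy / theta0).
Proof.
move=> theta0_neq0.
have y2_gt0 : 0 < vdot (y t0) (y t0).
  rewrite lt_neqAle eq_sym vdot_self_ge0 andbT.
  by apply: contra theta0_neq0 => /eqP y2_0; rewrite /theta0 /enorm y2_0 sqrtr0.
apply: is_derive_eq; first exact: is_derive1_comp (is_derive1_sqrt y2_gt0) is_derive_sqnorm.
by rewrite /theta0 /enorm; field.
Qed.

Lemma is_derive_sinc_enorm_scale :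
  is_derive t0 1 (fun s => sinc (enorm (y s)) *: y s)
    (((cos theta0 - sinc theta0) * vdot n0 Dy) *: n0 + sinc theta0 *: Dy).
Proof.
have [theta0_0 | theta0_neq0] := eqVneq theta0 0.
- rewrite /n0 (y0_eq0 theta0_0) !scaler0 add0r theta0_0 sinc0.
  have sinc_cont : {for t0, continuous (fun s => sinc (enorm (y s)))}.
    apply: (continuous_comp enorm_continuous).
    by rewrite -/theta0 theta0_0; exact: sinc_continuous0.
  have := is_derive_scale_root sinc_cont dy (y0_eq0 theta0_0).
  by rewrite -/theta0 theta0_0 sinc0.
- have dsinc : is_derive t0 1 (fun s => sinc (enorm (y s)))
      ((cos theta0 - sinc theta0) / theta0 * (vdot (y t0) Dy / theta0)).
    exact: (@is_derive1_comp _ _ (fun s => enorm (y s)) t0 _ _)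
      (is_derive_sinc theta0_neq0) (is_derive_enorm theta0_neq0).
  apply: is_derive_eq; first exact: is_derive_scale dsinc dy.
  by rewrite /n0 vdotZl !scalerA; congr (_ *: _ + _); field.
Qed.

Lemma is_derive_cos_enorm :
  is_derive t0 1 (fun s => cos (enorm (y s))) (- (sinc theta0 * vdot (y t0) Dy)).
Proof.
have [theta0_0 | theta0_neq0] := eqVneq theta0 0; last first.
  apply: is_derive_eq.
    exact: (@is_derive1_comp _ _ (fun s => enorm (y s)) t0 _ _)
      (is_derive_cos theta0) (is_derive_enorm theta0_neq0).
  by rewrite sincE //; field.
rewrite (y0_eq0 theta0_0) vdot0l mulr0 oppr0.
pose g s := sinc (enorm (y s) / 2) * sinc (enorm (y s) / 2) * (- 2^-1).
have cosE : (fun s => cos (enorm (y s))) = cst 1 + (fun s => g s *: vdot (y s) (y s)).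
  apply/funext => s.
  rewrite fctE /cst cos_sinc_half /g /enorm sqr_sqrtr ?vdot_self_ge0 //.
  set a := sinc _; set N := vdot _ _.
  by transitivity (1 + a * a * - 2^-1 * N); first ring.
have half_cont : {for t0, continuous (fun s => enorm (y s) / 2)}.
  exact: cvgM enorm_continuous (cvg_cst _).
have sinc_half_cont : {for t0, continuous (fun s => sinc (enorm (y s) / 2))}.
  apply: (continuous_comp half_cont).
  by rewrite /= -/theta0 theta0_0 mul0r; exact: sinc_continuous0.
have g_cont : {for t0, continuous g}.
  exact: cvgM (cvgM sinc_half_cont sinc_half_cont) (cvg_cst _).
have N0 : vdot (y t0) (y t0) = 0 by rewrite (y0_eq0 theta0_0) vdot0l.
have := is_deriveD (is_derive_cst (1 : R) t0 1)
  (is_derive_scale_root g_cont is_derive_sqnorm N0).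
by rewrite -cosE (y0_eq0 theta0_0) vdot0l !mulr0 scaler0 add0r.
Qed.

End QuaternionExp.

Section QuaternionAlgebra.
Variable R : realType.
Implicit Types (a b p q r : 'cV[R]_4).

Definition qc3 (v : 'cV[R]_3) (k : nat) : R := v (inord k) 0.

Lemma qcE (v : 'cV[R]_4) (i : 'I_4) j : v i j = qc v i.
Proof. by rewrite /qc inord_val (ord1 j). Qed.

Lemma qc3E (v : 'cV[R]_3) (i : 'I_3) j : v i j = qc3 v i.
Proof. by rewrite /qc3 inord_val (ord1 j). Qed.

(* Expands matrix products and rewrites every entry as [qc v k] or [qc3 v k]
   with a numeral [k]. *)
Local Ltac coef_simpl := rewrite /qc /qc3 ?mxE ?big_ord_recr ?big_ord0 /= ?mxE /=
  ?inordK //= ?qcE ?qc3E /= ?inordK //= ?mulr0n ?mulr1n.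
Local Ltac cV4_entries :=
  apply/matrixP => -[[|[|[|[|//]]]] ?] -[[|//] ?]; do 2 coef_simpl.
Local Ltac M4_entries :=
  apply/matrixP => -[[|[|[|[|//]]]] ?] -[[|[|[|[|//]]]] ?]; do 2 coef_simpl.

Lemma Hp_mulmx a b : Hp a *m b = Hm b *m a.
Proof. by cV4_entries; ring. Qed.

Lemma trmx_Hm_Hm r : (Hm r)^T *m Hm r = (\sum_i r i 0 ^+ 2)%:M.
Proof. by M4_entries; ring. Qed.

Lemma Hp_Hp_conjq p r : Hp (Hp p *m r) *m conjq r = (\sum_i r i 0 ^+ 2) *: p.
Proof. by cV4_entries; ring. Qed.

Lemma Hp_is_linear : linear (@Hp R).
Proof. by move=> c a b; M4_entries; ring. Qed.

Lemma qc0E r : qc r 0 = r 0 0.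
Proof. by rewrite /qc; congr (r _ _); apply: val_inj; rewrite /= inordK. Qed.

Lemma vec3E r (i : 'I_3) : vec3 r i 0 = r (lift 0 i) 0.
Proof. by rewrite mxE. Qed.

Lemma Qr_mulmx0 r (u : 'cV[R]_3) : (Qr r *m u) 0 0 = - vdot (vec3 r) u.
Proof. by rewrite /vdot; do 2 coef_simpl; ring. Qed.

Lemma Qr_mulmx_lift r (u : 'cV[R]_3) (i : 'I_3) :
  (Qr r *m u) (lift 0 i) 0 = ((Gamma r * vdot (nvec r) u) *: nvec r + Theta r *: u) i 0.
Proof. by rewrite /vdot; case: i => -[|[|[|//]]] ?; do 2 coef_simpl; ring. Qed.

Lemma phi_half r : phi r / 2 = acos (qc r 0).
Proof. by rewrite /phi mulrAC divff ?mul1r. Qed.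

End QuaternionAlgebra.

HB.instance Definition _ (R : realType) :=
  GRing.isLinear.Build R 'cV[R]_4 'M[R]_4 _ (@Hp R) (@Hp_is_linear R).

Section UnitQuaternion.
Variables (R : realType) (r : 'cV[R]_4).
Hypotheses (r_unit : unitq r) (acos_lt_pi : acos (qc r 0) < pi).

Let theta := acos (qc r 0).

Lemma unitq_vdot : qc r 0 ^+ 2 + vdot (vec3 r) (vec3 r) = 1.
Proof.
move: r_unit; rewrite /unitq big_ord_recl => <-; rewrite qc0E; congr (_ + _).
by apply: eq_bigr => i _; rewrite vec3E expr2.
Qed.

Lemma qc0_itv : -1 <= qc r 0 <= 1.
Proof.
have := unitq_vdot; have := vdot_self_ge0 (vec3 r).
by move=> ? ?; apply/andP; split; nra.
Qed.

Lemma cos_acos_qc0 : cos theta = qc r 0.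
Proof. by rewrite /theta acosK // in_itv /= qc0_itv. Qed.

Lemma sin_acos_qc0 : sin theta = enorm (vec3 r).
Proof. by rewrite /theta sin_acos ?qc0_itv // -unitq_vdot addrC addKr. Qed.

Lemma acos_qc0_ge0 : 0 <= theta.
Proof. exact: acos_ge0 qc0_itv. Qed.

Lemma sin_acos_qc0_gt0 : theta != 0 -> 0 < sin theta.
Proof.
move=> theta_neq0; apply: sin_gt0_pi.
by rewrite lt_neqAle eq_sym theta_neq0 acos_qc0_ge0.
Qed.

Lemma vec3_eq0 : theta = 0 -> vec3 r = 0.
Proof.
move=> theta0; apply: vdot_self_eq0.
by have := unitq_vdot; rewrite -cos_acos_qc0 theta0 cos0; lra.
Qed.

Lemma logrE : logr r = (theta / sin theta) *: vec3 r.
Proof. by rewrite /logr /nvec phi_half scalerA. Qed.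

Lemma enorm_logr : enorm (logr r) = theta.
Proof.
rewrite logrE enormZ -sin_acos_qc0.
have [-> | theta_neq0] := eqVneq theta 0; first by rewrite mul0r normr0 mul0r.
have sin_gt0 := sin_acos_qc0_gt0 theta_neq0.
by rewrite ger0_norm ?divr_ge0 ?acos_qc0_ge0 ?ltW // divfK ?gt_eqF.
Qed.

Lemma qc0_logr : qc r 0 = cos (enorm (logr r)).
Proof. by rewrite enorm_logr cos_acos_qc0. Qed.

Lemma vec3_logr : vec3 r = sinc (enorm (logr r)) *: logr r.
Proof.
rewrite enorm_logr; have [theta0 | theta_neq0] := eqVneq theta 0.
  by rewrite vec3_eq0 // logrE vec3_eq0 // !scaler0.
have sin_gt0 := sin_acos_qc0_gt0 theta_neq0.
rewrite logrE scalerA sincE // [X in X *: _](_ : _ = 1) ?scale1r //.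
by field; rewrite theta_neq0 gt_eqF.
Qed.

Lemma nvec_logr : nvec r = (enorm (logr r))^-1 *: logr r.
Proof.
rewrite enorm_logr logrE scalerA mulrA; have [theta0 | theta_neq0] := eqVneq theta 0.
  by rewrite /nvec vec3_eq0 // !scaler0.
by rewrite mulVf ?mul1r // /nvec phi_half.
Qed.

Lemma Theta_logr : Theta r = sinc (enorm (logr r)).
Proof. by rewrite enorm_logr /Theta /sinc phi_half /phi mulf_eq0 pnatr_eq0. Qed.

Lemma Qr_inj (u : 'cV[R]_3) : Qr r *m u = 0 -> u = 0.
Proof.
move=> Qu0; have sinc_neq0 : sinc (enorm (logr r)) != 0.
  by rewrite gt_eqF // sinc_gt0 // enorm_logr acos_qc0_ge0.
have logr_u0 : vdot (logr r) u = 0.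
  move: (congr1 (fun v : 'cV[R]_4 => v 0 0) Qu0) => /eqP.
  rewrite /= Qr_mulmx0 mxE vec3_logr vdotZl oppr_eq0 mulf_eq0.
  by rewrite (negbTE sinc_neq0) => /eqP.
apply/matrixP => i j; rewrite (ord1 j).
move: (congr1 (fun v : 'cV[R]_4 => v (lift 0 i) 0) Qu0) => /eqP.
rewrite /= Qr_mulmx_lift nvec_logr vdotZl logr_u0 !mulr0 scale0r add0r.
by rewrite Theta_logr !mxE mulf_eq0 (negbTE sinc_neq0) => /eqP.
Qed.

End UnitQuaternion.

Lemma is_derive_unitq (R : realType) (r : R -> 'cV[R]_4) (Dy : 'cV[R]_3) (t0 : R) :
  (forall t, unitq (r t)) -> (forall t, acos (qc (r t) 0) < pi) ->
  is_derive t0 1 (fun t => logr (r t)) Dy -> is_derive t0 1 r (Qr (r t0) *m Dy).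
Proof.
move=> r_unit r_lt_pi dy; apply/is_derive_mxP => i j; rewrite (ord1 j).
have [k ->|->] := unliftP 0 i.
- have := is_derive_sinc_enorm_scale dy; move/is_derive_mxP/(_ k 0).
  under eq_fun do rewrite -(vec3_logr (r_unit _) (r_lt_pi _)) vec3E.
  rewrite Qr_mulmx_lift /Gamma (qc0_logr (r_unit _) (r_lt_pi _)).
  by rewrite (nvec_logr (r_unit _) (r_lt_pi _)) (Theta_logr (r_unit _) (r_lt_pi _)).
- have := is_derive_cos_enorm dy.
  under eq_fun do rewrite -(qc0_logr (r_unit _) (r_lt_pi _)) qc0E.
  by rewrite Qr_mulmx0 (vec3_logr (r_unit _) (r_lt_pi _)) [vdot (_ *: logr _) _]vdotZl.
Qed.

Section DualQuaternion.
Variable R : realType.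
Implicit Types (r p : 'cV[R]_4).

Lemma Qp_mulmx (u : 'cV[R]_3) : Qp R *m u = col_mx (0 : 'cV_1) u.
Proof. by rewrite /Qp (@mul_col_mx R 1 3 3 1) mul0mx mul1mx. Qed.

Lemma trmx_Qp_Qp : (Qp R)^T *m Qp R = 1%:M.
Proof.
by rewrite /Qp (@tr_col_mx _ 1 3 3) (@mul_row_col _ 3 1 3 3) trmx0 mul0mx add0r trmx1 mul1mx.
Qed.

Lemma vec3_dsubmx r : vec3 r = dsubmx (r : 'cV_(1 + 3)).
Proof. by apply/colP => i; rewrite !mxE; congr (r _ _); apply: val_inj. Qed.

Lemma Qp_vec3 p : pureq p -> Qp R *m vec3 p = p.
Proof.
move=> p0; have p_u : usubmx (p : 'cV_(1 + 3)) = 0.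
  apply/matrixP => i j; rewrite !ord1 !mxE -p0 /qc; congr (p _ _).
  by apply: val_inj; rewrite /= inordK.
by rewrite Qp_mulmx vec3_dsubmx -p_u vsubmxK.
Qed.

Lemma Hp_Qp_half p : pureq p -> Hp (Qp R *m ((1 / 2) *: vec3 p)) = (1 / 2) *: Hp p.
Proof. by move=> p_pure; rewrite -scalemxAr Qp_vec3 // linearZ. Qed.

Lemma Hm_Qp_inj r (v : 'cV[R]_3) : unitq r -> Hm r *m Qp R *m v = 0 -> v = 0.
Proof.
move=> r_unit HQv0.
have <- : (Hm r *m Qp R)^T *m (Hm r *m Qp R *m v) = v.
  rewrite trmx_mul -!mulmxA (mulmxA (Hm r)^T) trmx_Hm_Hm r_unit mul1mx.
  by rewrite mulmxA trmx_Qp_Qp mul1mx.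
by rewrite HQv0 mulmx0.
Qed.

Lemma prim_xof r p : prim (xof r p) = r.
Proof. exact: col_mxKu. Qed.

Lemma pof_xof r p : unitq r -> pof (xof r p) = p.
Proof.
move=> r_unit; rewrite /pof /dual /xof col_mxKd prim_xof linearZ /= -scalemxAl.
by rewrite Hp_Hp_conjq r_unit !scalerA mulr1 mul1r divff ?pnatr_eq0 // scale1r.
Qed.

Lemma dlog_xof r p : unitq r -> dlog (xof r p) = col_mx (logr r) ((1 / 2) *: vec3 p).
Proof. by move=> r_unit; rewrite /dlog prim_xof pof_xof. Qed.

Lemma xof_pure r p : pureq p -> xof r p = col_mx r (Hp (Qp R *m ((1 / 2) *: vec3 p)) *m r).
Proof. by move=> p_pure; rewrite /xof Hp_Qp_half // scalemxAl. Qed.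

Lemma Q8_xof r p : unitq r ->
  Q8 (xof r p) = block_mx (Qr r) 0 ((1 / 2) *: (Hp p *m Qr r)) (Hm r *m Qp R).
Proof. by move=> r_unit; rewrite /Q8 prim_xof pof_xof. Qed.

Lemma Q8_inj r p (w : 'cV[R]_(3 + 3)) :
  unitq r -> acos (qc r 0) < pi -> Q8 (xof r p) *m w = 0 -> w = 0.
Proof.
move=> r_unit r_lt_pi; rewrite Q8_xof // -[w]vsubmxK mul_block_col mul0mx addr0.
move/eqP; rewrite col_mx_eq0 => /andP[/eqP/(Qr_inj r_unit r_lt_pi) u0].
by rewrite u0 mulmx0 add0r => /eqP/(Hm_Qp_inj r_unit) ->; rewrite col_mx0.
Qed.

End DualQuaternion.

Lemma is_derive_xof (R : realType) (r p : R -> 'cV[R]_4) (Da Db : 'cV[R]_3) (t0 : R) :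
  (forall t, unitq (r t)) -> (forall t, pureq (p t)) ->
  (forall t, acos (qc (r t) 0) < pi) ->
  is_derive t0 1 (fun t => logr (r t)) Da ->
  is_derive t0 1 (fun t => (1 / 2) *: vec3 (p t)) Db ->
  is_derive t0 1 (fun t => xof (r t) (p t)) (Q8 (xof (r t0) (p t0)) *m col_mx Da Db).
Proof.
move=> r_unit p_pure r_lt_pi da db.
have dr := is_derive_unitq r_unit r_lt_pi da.
have dHp := is_derive_linear (@Hp R) (is_derive_linear (mulmx (Qp R)) db).
rewrite /= in dHp.
under eq_fun do rewrite xof_pure //.
rewrite Q8_xof // mul_block_col mul0mx addr0.
apply/is_derive_col_mxP; split => //.
apply: is_derive_eq; first exact: is_derive_mulmx dHp dr.
by rewrite Hp_mulmx Hp_Qp_half // !mulmxA -scalemxAl addrC.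
Qed.

Theorem theorem4 (R : realType) (r p : R -> 'cV[R]_4) (t0 : R) :
  (forall t, unitq (r t)) ->
  (forall t, pureq (p t)) ->
  (forall t, 0 <= phi (r t) < 2 * pi) ->
  derivable (fun t => xof (r t) (p t)) t0 1 ->
  derivable (fun t => dlog (xof (r t) (p t))) t0 1 ->
  let x := fun t => xof (r t) (p t) in
  let y := fun t => dlog (x t) in
  [/\ derive1 x t0 = Q8 (x t0) *m derive1 y t0,
      \rank (Q8 (x t0)) = (3 + 3)%N,
      invmx ((Q8 (x t0))^T *m Q8 (x t0)) *m (Q8 (x t0))^T *m Q8 (x t0) = 1%:M
    & (derive1 x t0 = 0 <-> derive1 y t0 = 0)].
Proof.
move=> r_unit p_pure phi_itv _ dy x y.
have r_lt_pi t : acos (qc (r t) 0) < pi.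
  by move: (phi_itv t); rewrite -phi_half => /andP[_]; lra.
have yE : y = fun t => col_mx (logr (r t)) ((1 / 2) *: vec3 (p t)).
  by apply/funext => t; rewrite /y /x dlog_xof.
have [da db] : is_derive t0 1 (fun t => logr (r t)) (usubmx ('D_1 y t0)) /\
    is_derive t0 1 (fun t => (1 / 2) *: vec3 (p t)) (dsubmx ('D_1 y t0)).
  by apply/is_derive_col_mxP; rewrite vsubmxK -yE; exact: derivableP.
have dx := is_derive_xof r_unit p_pure r_lt_pi da db.
have x'E : derive1 x t0 = Q8 (x t0) *m derive1 y t0.
  by rewrite !derive1E derive_val vsubmxK.
have Q8_inj0 w := @Q8_inj R (r t0) (p t0) w (r_unit t0) (r_lt_pi t0).
split => //.
- exact: mxrank_inj.
- by rewrite -mulmxA mulVmx // trmx_mul_unitmx.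
- by rewrite x'E; split=> [/Q8_inj0 | ->]; last rewrite mulmx0.
Qed.
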